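(* Fix an integer $d\ge 2$ and $\theta>0$, and regard $F$ (defined in the context) as an affine function of the real variables $\sigma_{CC,kl},\sigma_{CD,kl},\sigma_{DD,kl}$, $k,l\in\{0,\ldots,d-1\}$, with all other quantities held fixed. Then, for every $k,l\in\{0,\ldots,d-1\}$: (i) the coefficient of $\sigma_{CC,kl}$ in $F$ is strictly negative; (ii) the coefficient of $\sigma_{DD,kl}$ in $F$ is strictly positive; (iii) the coefficient of $\sigma_{CD,kl}$ in $F$ is strictly positive if $k+l>d-1$, strictly negative if $k+l<d-1$, and zero if $k+l=d-1$. Consequently, decreasing any $\sigma_{CC,kl}$ or increasing any $\sigma_{DD,kl}$ increases $F$; increasing $\sigma_{CD,kl}$ increases $F$ when $k+l>d-1$, decreases it when $k+l<d-1$, and leaves it unchanged when $k+l=d-1$.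
   Context: Model: in a large well-mixed population, individuals use strategy $C$ (cooperate) or $D$ (defect) and interact in random groups of size $d$. A $C$-player (resp. $D$-player) whose $d-1$ partners include $k$ cooperators receives the random payoff $a_k$ (resp. $b_k$), $k=0,\ldots,d-1$. Payoffs are redrawn independently at each time step, and for a selection intensity $\delta\ge 0$ they satisfy $E[a_k]=\mu_{C,k}\delta+o(\delta)$, $E[b_k]=\mu_{D,k}\delta+o(\delta)$, $E[a_ka_l]=\sigma_{CC,kl}\delta+o(\delta)$, $E[b_kb_l]=\sigma_{DD,kl}\delta+o(\delta)$, $E[a_kb_l]=\sigma_{CD,kl}\delta+o(\delta)$, with all moments of order at least $3$ being $o(\delta)$. The population evolves by a Moran birth–death process with fitness $1+{}$payoff and symmetric mutation, with scaled mutation rate $\theta>0$. For integers $0\le k\le n$ define $$\psi_n^k=\frac{\prod_{i=1}^{k}(\theta+i-1)\prod_{j=1}^{n-k}(\theta+j-1)}{\prod_{l=1}^{n}(2\theta+l-1)}$$ (empty products equal $1$), and define $$F=\sum_{k=0}^{d-1}\binom{d-1}{k}\psi_{d+1}^{k+1}(\mu_{C,k}-\mu_{D,k})+\sum_{k,l=0}^{d-1}\binom{d-1}{k}\binom{d-1}{l}\Big[-\psi_{2d+1}^{k+l+2}(\sigma_{CC,kl}-\sigma_{CD,kl})+\psi_{2d+1}^{k+l+1}(\sigma_{DD,kl}-\sigma_{CD,kl})\Big].$$ In the paper's large-population, weak-selection approximation, the stationary average abundance of $C$ is $\tfrac12+\tfrac{\delta(1-u)}{u}F$ to first order in $\delta$,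 where $u$ is the per-step mutation probability. Thus weak selection favors the abundance of $C$ iff $F>0$, and increasing (resp. decreasing) $F$ increases (resp. decreases) the average abundance of $C$. *)

From mathcomp Require Import all_boot all_order all_algebra.
Set Implicit Arguments. Unset Strict Implicit. Unset Printing Implicit Defensive.
Import Order.TTheory GRing.Theory Num.Theory.
Local Open Scope ring_scope.

Definition psi (R : realFieldType) (theta : R) (n k : nat) : R :=
  (\prod_(i < k) (theta + i%:R)) * (\prod_(j < n - k) (theta + j%:R))
  / (\prod_(l < n) (2 * theta + l%:R)).

Definition F (R : realFieldType) (d : nat) (theta : R)
  (muC muD : 'I_d -> R) (sCC sCD sDD : 'I_d -> 'I_d -> R) : R :=
  \sum_(k < d) ('C(d.-1, k))%:R * psi theta d.+1 k.+1 * (muC k - muD k)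
  + \sum_(k < d) \sum_(l < d) ('C(d.-1, k))%:R * ('C(d.-1, l))%:R *
      (- psi theta (2 * d).+1 (k + l).+2 * (sCC k l - sCD k l)
       + psi theta (2 * d).+1 (k + l).+1 * (sDD k l - sCD k l)).

Definition upd (R : realFieldType) (d : nat) (s : 'I_d -> 'I_d -> R)
  (k l : 'I_d) (t : R) : 'I_d -> 'I_d -> R :=
  fun i j => if (i == k) && (j == l) then s i j + t else s i j.

(* c is the coefficient of sigma_{CC,kl} (resp. CD, DD) in the affine function F:
   changing that single variable by t changes F by c * t, whatever the other inputs. *)
Definition is_coef_CC (R : realFieldType) (d : nat) (theta : R) (k l : 'I_d) (c : R) :=
  forall muC muD sCC sCD sDD (t : R),
    F theta muC muD (upd sCC k l t) sCD sDD = F theta muC muD sCC sCD sDD + c * t.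
Definition is_coef_CD (R : realFieldType) (d : nat) (theta : R) (k l : 'I_d) (c : R) :=
  forall muC muD sCC sCD sDD (t : R),
    F theta muC muD sCC (upd sCD k l t) sDD = F theta muC muD sCC sCD sDD + c * t.
Definition is_coef_DD (R : realFieldType) (d : nat) (theta : R) (k l : 'I_d) (c : R) :=
  forall muC muD sCC sCD sDD (t : R),
    F theta muC muD sCC sCD (upd sDD k l t) = F theta muC muD sCC sCD sDD + c * t.

From mathcomp Require Import all_boot all_order all_algebra.
From mathcomp Require Import zify ring.
Set Implicit Arguments. Unset Strict Implicit. Unset Printing Implicit Defensive.
Import Order.TTheory GRing.Theory Num.Theory.
Local Open Scope ring_scope.

(* Every psi is
   positive, and psi_n^{m+1} / psi_n^m = (theta + m) / (theta + n - m - 1), so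
   psi_n^{m+1} - psi_n^m has the sign of m - (n - m - 1); for n = 2d+1 and
   m = k+l+1 this is the sign of k + l - (d - 1). *)

Lemma sumr2_sub_single (V : zmodType) (I J : finType) (f g : I -> J -> V)
    (i0 : I) (j0 : J) :
  (forall i j, ~~ ((i == i0) && (j == j0)) -> f i j = g i j) ->
  \sum_i \sum_j f i j - \sum_i \sum_j g i j = f i0 j0 - g i0 j0.
Proof.
move=> fg; rewrite -sumrB (bigD1 i0) //= [X in _ + X]big1 ?addr0 => [|i ne_i].
  rewrite -sumrB (bigD1 j0) //= [X in _ + X]big1 ?addr0 // => j ne_j.
  by rewrite fg ?eqxx ?(negPf ne_j) ?subrr.
by rewrite -sumrB big1 // => j _; rewrite fg ?(negPf ne_i) ?subrr.
Qed.

Section Psi.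
Variables (R : realFieldType) (theta : R).
Hypothesis theta_gt0 : 0 < theta.

Lemma prodr_shift_gt0 (x : R) (n : nat) : 0 < x -> 0 < \prod_(i < n) (x + i%:R).
Proof. by move=> x_gt0; apply: prodr_gt0 => i _; rewrite ltr_wpDr. Qed.

Lemma psi_gt0 (n k : nat) : 0 < psi theta n k.
Proof.
have two_theta_gt0 : 0 < 2 * theta by rewrite mulr_gt0.
by rewrite divr_gt0 ?mulr_gt0 ?prodr_shift_gt0.
Qed.

Lemma psi_succ_sub (n m : nat) : (m < n)%N ->
  exists2 P : R, 0 < P &
    psi theta n m.+1 - psi theta n m = P * (m%:R - (n - m.+1)%:R).
Proof.
move=> lt_mn; have two_theta_gt0 : 0 < 2 * theta by rewrite mulr_gt0.
exists ((\prod_(i < m) (theta + i%:R)) * (\prod_(j < n - m.+1) (theta + j%:R))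
        / (\prod_(i < n) (2 * theta + i%:R))).
  by rewrite divr_gt0 ?mulr_gt0 ?prodr_shift_gt0.
rewrite /psi big_ord_recr (_ : (n - m = (n - m.+1).+1)%N); last by lia.
by rewrite [X in _ - _ * X / _]big_ord_recr /=; ring.
Qed.

End Psi.

Section Coefficients.
Variables (R : realFieldType) (d : nat) (theta : R).

(* The mu-sums cancel in F' - F, and of the sigma double sum only the (k, l)
   summand changes. *)
Lemma coef_CC (k l : 'I_d) : is_coef_CC theta k l
  (- ('C(d.-1, k)%:R * 'C(d.-1, l)%:R * psi theta (2 * d).+1 (k + l).+2)).
Proof.
move=> muC muD sCC sCD sDD t; rewrite addrC; apply: (canRL (subrK _)).
rewrite /F [X in X - _]addrC addrKA (sumr2_sub_single (i0 := k) (j0 := l)).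
  by rewrite /upd !eqxx /=; ring.
by move=> i j; rewrite /upd => /negPf ->.
Qed.

Lemma coef_DD (k l : 'I_d) : is_coef_DD theta k l
  ('C(d.-1, k)%:R * 'C(d.-1, l)%:R * psi theta (2 * d).+1 (k + l).+1).
Proof.
move=> muC muD sCC sCD sDD t; rewrite addrC; apply: (canRL (subrK _)).
rewrite /F [X in X - _]addrC addrKA (sumr2_sub_single (i0 := k) (j0 := l)).
  by rewrite /upd !eqxx /=; ring.
by move=> i j; rewrite /upd => /negPf ->.
Qed.

Lemma coef_CD (k l : 'I_d) : is_coef_CD theta k l
  ('C(d.-1, k)%:R * 'C(d.-1, l)%:R *
   (psi theta (2 * d).+1 (k + l).+2 - psi theta (2 * d).+1 (k + l).+1)).
Proof.
move=> muC muD sCC sCD sDD t; rewrite addrC; apply: (canRL (subrK _)).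
rewrite /F [X in X - _]addrC addrKA (sumr2_sub_single (i0 := k) (j0 := l)).
  by rewrite /upd !eqxx /=; ring.
by move=> i j; rewrite /upd => /negPf ->.
Qed.

End Coefficients.

Theorem mainTheorem2 (R : realFieldType) (d : nat) (theta : R) :
  (2 <= d)%N -> 0 < theta ->
  forall k l : 'I_d,
    (exists2 c : R, is_coef_CC theta k l c & c < 0) /\
    (exists2 c : R, is_coef_DD theta k l c & 0 < c) /\
    (exists c : R, [/\ is_coef_CD theta k l c,
                      (d.-1 < k + l)%N -> 0 < c,
                      (k + l < d.-1)%N -> c < 0 &
                      (k + l = d.-1)%N -> c = 0]).
Proof.
move=> d_ge2 theta_gt0 k l.
have binom_gt0 : 0 < 'C(d.-1, k)%:R * 'C(d.-1, l)%:R :> R.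
  by rewrite mulr_gt0 // ltr0n bin_gt0 -ltnS prednK ?ltn_ord //; lia.
split; [|split].
- by eexists; [exact: coef_CC | rewrite oppr_lt0 mulr_gt0 ?psi_gt0].
- by eexists; [exact: coef_DD | rewrite mulr_gt0 ?psi_gt0].
have [|P P_gt0 dpsi] := psi_succ_sub theta_gt0 (n := (2 * d).+1) (m := (k + l).+1).
  by have := ltn_ord k; have := ltn_ord l; lia.
eexists; split; first exact: coef_CD.
all: rewrite dpsi.
- by move=> lt_dkl; rewrite pmulr_rgt0 // pmulr_rgt0 // subr_gt0 ltr_nat; lia.
- by move=> lt_kld; rewrite pmulr_rlt0 // pmulr_rlt0 // subr_lt0 ltr_nat; lia.
- by move=> eq_kld; rewrite (_ : (_ - _)%N = (k + l).+1) ?subrr ?mulr0 //; lia.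
Qed.
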